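(* Let $B$ be a graph having a path-decomposition of width $p$ and a proper $2$-coloring into stable sets $C_1, C_2$ with $|C_1| \ge |C_2|$. Then for every non-negative integer $a$ with $|C_2| - p \le a \le |C_1|$, there exist a set $X$ of at most $p$ vertices of $B$ and a proper $2$-coloring of $B\setminus X$ into stable sets $C'_1, C'_2$ with $|C'_1| = a$. *)

From mathcomp Require Import all_boot.
Set Implicit Arguments. Unset Strict Implicit. Unset Printing Implicit Defensive.

Definition simple_graph (T : finType) (e : rel T) : Prop :=
  symmetric e /\ irreflexive e.

Definition path_decomposition (T : finType) (e : rel T) (bags : seq {set T}) : Prop :=
  [/\ forall v : T, exists2 b, b \in bags & v \in b,
      forall u v : T, e u v -> exists2 b, b \in bags & (u \in b) && (v \in b)
    & forall (v : T) (i j k : nat), i <= j <= k -> k < size bags ->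
        v \in nth set0 bags i -> v \in nth set0 bags k -> v \in nth set0 bags j].

(* Width of a (nonempty) path-decomposition is (max bag size) - 1;
   "width p" means the maximum bag size is p+1. *)
Definition pd_width_eq (T : finType) (bags : seq {set T}) (p : nat) : Prop :=
  \max_(b <- bags) #|b| = p.+1.

Definition stable (T : finType) (e : rel T) (S : {set T}) : Prop :=
  forall u v, u \in S -> v \in S -> ~~ e u v.

Definition proper_2coloring_on (T : finType) (e : rel T) (V C1 C2 : {set T}) : Prop :=
  [/\ C1 :|: C2 = V, [disjoint C1 & C2], stable e C1 & stable e C2].

From mathcomp Require Import all_boot zify.

Set Implicit Arguments.
Unset Strict Implicit.
Unset Printing Implicit Defensive.

(* Let L_k be the vertices whose last bag comes before bag k.  Swapping the two
   colours inside L_k and deleting the neighbours N_k of L_k outside L_k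
   (all of which lie in bag k) leaves a proper 2-colouring, whose first class
   has size f(k), with f(0) = |C1| and f(n) = |C2| for n bags.  Going from
   L_(k+1) down to L_k only involves vertices of bag k, so
   f(k) + |N_k| <= f(k+1) + p + 1.  At the last k with f(k) >= a we therefore
   have f(k) + |N_k| <= a + p, and deleting N_k together with f(k) - a vertices
   of the first class removes at most p vertices. *)

Lemma exists_subset_card (T : finType) (S : {set T}) (k : nat) :
  k <= #|S| -> exists2 D : {set T}, D \subset S & #|D| = k.
Proof.
move=> le_kS; exists [set x in take k (enum S)].
  by apply/subsetP => x; rewrite inE => /mem_take; rewrite mem_enum.
by rewrite cardsE (card_uniqP _) ?take_uniq ?enum_uniq // size_takel -?cardE.
Qed.

Lemma last_index_above (f : nat -> nat) (a n : nat) :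
  a <= f 0 -> exists2 k, k <= n & a <= f k /\ (k < n -> f k.+1 < a).
Proof.
move=> a_f0; elim: n => [|n [k le_kn [a_fk above]]]; first by exists 0.
have [lt_kn | ge_kn] := ltnP k n; first by exists k; [lia | split => // _; apply: above].
have [a_fn1 | fn1_a] := leqP a (f n.+1); first by exists n.+1; last by rewrite ltnn.
by exists k; [lia | split => // _; have -> : k = n by lia].
Qed.

Section Recolouring.

Variables (T : finType) (e : rel T).

Definition swap_colour (L N A B : {set T}) : {set T} :=
  (B :&: L) :|: (A :&: ~: (L :|: N)).

Lemma card_swap_colour (L N A B : {set T}) :
  #|swap_colour L N A B| = #|B :&: L| + #|A :&: ~: (L :|: N)|.
Proof.
rewrite cardsU; suff -> : B :&: L :&: (A :&: ~: (L :|: N)) = set0 by rewrite cards0 subn0.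
by apply/setP => x; rewrite !inE; case: (x \in L); rewrite ?andbF.
Qed.

Lemma card_swap_colour_le (L L' N N' A B P : {set T}) :
  L \subset L' -> N \subset P -> (L' :|: N') :\: L \subset P ->
  #|swap_colour L N A B| + #|N| <= #|swap_colour L' N' A B| + #|P|.
Proof.
move=> sLL' sNP sL'N'P; rewrite !card_swap_colour.
have le_BL : #|B :&: L| <= #|B :&: L'| by apply/subset_leq_card/setIS.
have sA : A :&: ~: (L :|: N) \subset (A :&: ~: (L' :|: N')) :|: (P :\: N).
  apply/subsetP => x; rewrite !inE negb_or => /and3P[xA xL xN].
  rewrite xA xN /= -implyNb negbK; apply/implyP => xL'N'.
  by rewrite (subsetP sL'N'P) // !inE xL.
have cardP : #|P :\: N| + #|N| = #|P| by rewrite -(cardsID N P) (setIidPr sNP) addnC.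
have := leq_trans (subset_leq_card sA) (leq_card_setU _ _); lia.
Qed.

Lemma stableS (A B : {set T}) : stable e A -> B \subset A -> stable e B.
Proof. by move=> stA /subsetP sBA u v /sBA uA /sBA vA; apply: stA. Qed.

Hypothesis e_sym : symmetric e.

Lemma stable_swap_colour (L N A B : {set T}) :
  stable e A -> stable e B ->
  (forall u w, u \in L -> w \notin L :|: N -> ~~ e u w) ->
  stable e (swap_colour L N A B).
Proof.
move=> stA stB noE u v; rewrite !inE.
have noE' x y : x \in L -> y \notin L :|: N -> ~~ e y x by rewrite e_sym; apply: noE.
by case/orP=> /andP[xC xL] /orP[]/andP[yC yL];
  [apply: stB | apply: noE | apply: noE' | apply: stA]; rewrite ?inE.
Qed.

Lemma proper_2coloring_swap (V L N C1 C2 : {set T}) :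
  proper_2coloring_on e V C1 C2 -> [disjoint L & N] ->
  (forall u w, u \in L -> w \notin L :|: N -> ~~ e u w) ->
  proper_2coloring_on e (V :\: N) (swap_colour L N C1 C2) (swap_colour L N C2 C1).
Proof.
move=> [<- dC st1 st2] dLN noE; split; try exact: stable_swap_colour.
  apply/setP => x; move/setP/(_ x): (disjoint_setI0 dLN); rewrite !inE.
  by case: (x \in L) (x \in N) (x \in C1) (x \in C2) => -[] [] [].
rewrite -setI_eq0; apply/eqP/setP => x; move/setP/(_ x): (disjoint_setI0 dC).
by rewrite !inE; case: (x \in L) (x \in N) (x \in C1) (x \in C2) => -[] [] [].
Qed.

Lemma proper_2coloring_delete (V D A B : {set T}) :
  proper_2coloring_on e V A B -> D \subset A ->
  proper_2coloring_on e (V :\: D) (A :\: D) B.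
Proof.
move=> [<- dAB stA stB] sDA.
have dBD : [disjoint B & D] by rewrite disjoint_sym (disjointWl sDA dAB).
split=> //; first by rewrite setDUl (setDidPl dBD).
  by apply: disjointWl dAB; apply: subsetDl.
by apply: stableS stA _; apply: subsetDl.
Qed.

Lemma shrink_colour_class (N A B : {set T}) (p a : nat) :
  proper_2coloring_on e (~: N) A B -> a <= #|A| -> #|A| + #|N| <= a + p ->
  exists X : {set T}, #|X| <= p /\
    exists C1' C2' : {set T}, proper_2coloring_on e (~: X) C1' C2' /\ #|C1'| = a.
Proof.
move=> colN le_aA le_Ap; have [D sDA cardD] := @exists_subset_card _ A (#|A| - a) (leq_subr _ _).
exists (N :|: D); split; first by have := (leq_card_setU N D).1; lia.
exists (A :\: D), B; split.
  by rewrite setCU -setDE; apply: proper_2coloring_delete.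
by rewrite cardsD (setIidPr sDA) cardD; lia.
Qed.

Definition boundary (L : {set T}) : {set T} :=
  [set u | (u \notin L) && [exists w in L, e w u]].

Lemma disjoint_boundary (L : {set T}) : [disjoint L & boundary L].
Proof. by rewrite -setI_eq0 -subset0; apply/subsetP => x; rewrite !inE; case: (x \in L). Qed.

Lemma boundary_no_edge (L : {set T}) u w :
  u \in L -> w \notin L :|: boundary L -> ~~ e u w.
Proof.
move=> uL; rewrite !inE negb_or => /andP[wL]; rewrite wL /=.
by apply: contra => euw; apply/existsP; exists u; rewrite uL.
Qed.

Lemma boundary0 : boundary set0 = set0.
Proof. by apply/setP => x; rewrite !inE; apply/negbTE/existsP => -[w]; rewrite inE. Qed.

Lemma boundaryT : boundary setT = set0.
Proof. by apply/setP => x; rewrite !inE. Qed.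

End Recolouring.

Section PathDecomposition.

Variables (T : finType) (bags : seq {set T}).

Local Notation bag i := (nth set0 bags i).

Definition last_bag (v : T) : nat := \max_(i < size bags | v \in bag i) i.

Definition bag_prefix (k : nat) : {set T} := [set v | last_bag v < k].

Lemma last_bag_ub v i : i < size bags -> v \in bag i -> i <= last_bag v.
Proof. by move=> lt_i vi; apply: (@leq_bigmax_cond _ _ _ (Ordinal lt_i)). Qed.

Lemma last_bag_spec v b : b \in bags -> v \in b ->
  last_bag v < size bags /\ v \in bag (last_bag v).
Proof.
move=> bin vb; have lt_b : index b bags < size bags by rewrite index_mem.
have : 0 < #|[pred i : 'I_(size bags) | v \in bag i]|.
  by apply/card_gt0P; exists (Ordinal lt_b); rewrite inE /= nth_index.
by rewrite /last_bag; case/(eq_bigmax_cond (nat_of_ord (n := _))) => i vi ->.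
Qed.

Lemma card_bag_le k : k < size bags -> #|bag k| <= \max_(b <- bags) #|b|.
Proof. by move=> lt_k; apply: (leq_bigmax_seq (P := predT)); rewrite ?mem_nth. Qed.

Lemma bag_prefix0 : bag_prefix 0 = set0.
Proof. by apply/setP => v; rewrite !inE. Qed.

Lemma bag_prefix_subS k : bag_prefix k \subset bag_prefix k.+1.
Proof. by apply/subsetP => v; rewrite !inE; apply: ltnW. Qed.

Hypothesis bags_cover : forall v : T, exists2 b, b \in bags & v \in b.

Lemma bag_prefix_size : bag_prefix (size bags) = setT.
Proof.
apply/setP => v; rewrite !inE; have [b bin vb] := bags_cover v.
by case: (last_bag_spec bin vb).
Qed.

Lemma bag_prefixS_sub k : bag_prefix k.+1 :\: bag_prefix k \subset bag k.
Proof.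
apply/subsetP => v; rewrite !inE -leqNgt ltnS => /andP[le_kv le_vk].
have [b bin vb] := bags_cover v; have [_] := last_bag_spec bin vb.
by have -> : last_bag v = k by apply/eqP; rewrite eqn_leq le_vk.
Qed.

Variable e : rel T.
Hypothesis bags_edge : forall u v : T, e u v -> exists2 b, b \in bags & (u \in b) && (v \in b).
Hypothesis bags_convex : forall (v : T) (i j k : nat), i <= j <= k -> k < size bags ->
  v \in bag i -> v \in bag k -> v \in bag j.

Lemma edge_mem_bag w u m : e w u -> last_bag w <= m <= last_bag u -> u \in bag m.
Proof.
move=> ewu /andP[le_wm le_mu]; have [b bin /andP[wb ub]] := bags_edge ewu.
have [lt_u u_last] := last_bag_spec bin ub.
have lt_b : index b bags < size bags by rewrite index_mem.
apply: (bags_convex (i := index b bags) (k := last_bag u)) => //; last by rewrite nth_index.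
rewrite le_mu andbT (leq_trans _ le_wm) // last_bag_ub // nth_index //.
Qed.

Lemma boundary_bag_prefix_sub j k :
  k <= j <= k.+1 -> boundary e (bag_prefix j) \subset bag k.
Proof.
move=> /andP[le_kj le_jk]; apply/subsetP => u; rewrite !inE -leqNgt.
case/andP=> le_ju /existsP[w]; rewrite inE => /andP[lt_wj ewu].
by apply: (edge_mem_bag ewu); rewrite -ltnS (leq_trans lt_wj le_jk) (leq_trans le_kj le_ju).
Qed.

Lemma card_swap_colour_prefix_step (A B : {set T}) k :
  #|swap_colour (bag_prefix k) (boundary e (bag_prefix k)) A B| + #|boundary e (bag_prefix k)|
    <= #|swap_colour (bag_prefix k.+1) (boundary e (bag_prefix k.+1)) A B| + #|bag k|.
Proof.
apply: card_swap_colour_le; first exact: bag_prefix_subS.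
  by apply: boundary_bag_prefix_sub; rewrite leqnn leqnSn.
rewrite setDUl subUset bag_prefixS_sub (subset_trans (subsetDl _ _)) //.
by apply: boundary_bag_prefix_sub; rewrite leqnSn leqnn.
Qed.

End PathDecomposition.

Theorem lemma1 (T : finType) (e : rel T) (bags : seq {set T}) (p : nat)
    (C1 C2 : {set T}) :
  simple_graph e ->
  path_decomposition e bags -> pd_width_eq bags p ->
  proper_2coloring_on e setT C1 C2 ->
  #|C2| <= #|C1| ->
  forall a : nat, #|C2| <= a + p -> a <= #|C1| ->
  exists X : {set T}, #|X| <= p /\
    exists C1' C2' : {set T}, proper_2coloring_on e (~: X) C1' C2' /\ #|C1'| = a.
Proof.
move=> [e_sym _] [cover edge convex] width col _ a le_C2 le_C1.
pose L k := bag_prefix bags k.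
pose f k := #|swap_colour (L k) (boundary e (L k)) C1 C2|.
have f0 : f 0 = #|C1|.
  by rewrite /f /L bag_prefix0 boundary0 card_swap_colour setI0 cards0 setU0 setC0 setIT.
have le_a_f0 : a <= f 0 by rewrite f0.
have [k le_kn [le_a_fk fk_step]] := last_index_above (size bags) le_a_f0.
apply: (shrink_colour_class (B := swap_colour (L k) (boundary e (L k)) C2 C1) _ le_a_fk).
  rewrite -setTD; apply: proper_2coloring_swap => //.
    exact: disjoint_boundary.
  exact: boundary_no_edge.
have [lt_kn | ge_kn] := ltnP k (size bags).
  have := card_swap_colour_prefix_step cover edge convex C1 C2 k.
  have := card_bag_le lt_kn; rewrite width; have := fk_step lt_kn; rewrite /f /L; lia.
have -> : k = size bags by lia.
rewrite /f /L (bag_prefix_size cover) boundaryT cards0 card_swap_colour.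
by rewrite setIT setU0 setCT setI0 cards0 !addn0.
Qed.
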